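(* Let $\Gamma$ be a $q$-connected finite simple graph on $n$ vertices ($q\ge1$). Then $\zeta_\alpha(\Gamma)=0$ for every composition $\alpha=(a_1,\dots,a_k)\models n$ such that $a_j>1$ for some $j>k-q$. In particular, if $\Gamma$ is connected then $\zeta_\alpha(\Gamma)=0$ whenever the last part of $\alpha$ exceeds $1$.
   Context: A graph is $q$-connected if it has more than $q$ vertices and remains connected after deleting any set of fewer than $q$ vertices. For a coloring $\lambda:V\to\mathbb{N}$ of a finite simple graph $\Gamma$ with values $i_1<\dots<i_k$, let $I_j=\lambda^{-1}(\{i_1,\dots,i_j\})$, $I_0=\emptyset$. It is ordered if for each $j$, no two distinct vertices $u,w$ with $\lambda(u)=\lambda(w)=i_j$ are joined by a path in $\Gamma$ (possibly a single edge) all of whose internal vertices lie in $I_{j-1}$. Its type is $(|\lambda^{-1}(i_1)|,\dots,|\lambda^{-1}(i_k)|)$. For a composition $\alpha$ of $n$ with $k(\alpha)$ parts, $\zeta_\alpha(\Gamma)$ is the number of surjective ordered colorings $\lambda:V\to\{1,\dots,k(\alpha)\}$ of type $\alpha$. *)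

From HB Require Import structures.
From mathcomp Require Import all_boot.
From Stdlib Require Import ClassicalEpsilon.
Set Implicit Arguments. Unset Strict Implicit. Unset Printing Implicit Defensive.

Definition simple_graph (T : finType) (e : rel T) : Prop :=
  symmetric e /\ irreflexive e.

Definition del_rel (T : finType) (e : rel T) (S : {set T}) : rel T :=
  [rel x y | [&& e x y, x \notin S & y \notin S]].

Definition q_connected (T : finType) (e : rel T) (q : nat) : Prop :=
  q < #|T| /\
  forall S : {set T}, #|S| < q ->
    forall u w, u \notin S -> w \notin S -> connect (del_rel e S) u w.

Definition connected_graph (T : finType) (e : rel T) : Prop :=
  forall u w, connect e u w.

Definition path_via (T : finType) (e : rel T) (u w : T) (p : seq T) : bool :=
  path e u (rcons p w).

Definition ordered_coloring (T : finType) (e : rel T) (lam : T -> nat) : Prop :=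
  forall u w, u != w -> lam u = lam w ->
    ~ (exists p : seq T, path_via e u w p && all (fun x => lam x < lam u) p).

Definition orderedb (T : finType) (e : rel T) (lam : T -> nat) : bool :=
  if excluded_middle_informative (ordered_coloring e lam) then true else false.

Definition composition (n : nat) (alpha : seq nat) : bool :=
  all (fun a => 0 < a) alpha && (sumn alpha == n).

(* Colourings V -> {1,...,k} are encoded as l : {ffun T -> 'I_k}, vertex x
   having colour (val (l x)).+1. *)
Definition colour (T : finType) (k : nat) (l : {ffun T -> 'I_k}) (x : T) : nat :=
  (val (l x)).+1.

Definition zeta (T : finType) (e : rel T) (alpha : seq nat) : nat :=
  #|[set l : {ffun T -> 'I_(size alpha)} |
      [&& [forall i, exists x, l x == i] ,
          orderedb e (colour l)
        & [forall i : 'I_(size alpha), #|[set x | l x == i]| == nth 0 alpha i]]]|.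

(* Let u != w share colour c in an ordered colouring, and let S be the set of
   vertices z of colour > c reachable from u through vertices of colour at most
   that of z. Orderedness makes the colouring injective on S, so S has fewer
   vertices than there are colours above c. Yet S separates u from w: on a path
   from u to w a vertex of maximal colour is either of colour c, contradicting
   orderedness, or lies in S. Hence if fewer than q colours exceed c, the
   q-connectivity of the graph forces the colour class of c to be a singleton. *)

From mathcomp Require Import all_boot.
From mathcomp Require Import zify.
From Stdlib Require Import ClassicalEpsilon.
Set Implicit Arguments. Unset Strict Implicit.

Lemma card_ord_gt k (J : 'I_k) : #|[set i : 'I_k | J < i]| = k - J.+1.
Proof.
rewrite -sum1dep_card -(big_mkord (fun i => J < i) (fun _ => 1)).
rewrite (@big_cat_nat _ _ _ J.+1) //= big_nat_cond big1 => [|i /andP[/andP[_]]];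
  last by rewrite ltnS leqNgt => /negPf ->.
rewrite add0n big_nat_cond (eq_bigl (fun i => (J < i < k) && true)) => [|i];
  last by rewrite andbT andb_idr // => /andP[].
by rewrite -big_nat_cond sum_nat_const_nat muln1.
Qed.

Lemma orderedbP (T : finType) (e : rel T) (lam : T -> nat) :
  reflect (ordered_coloring e lam) (orderedb e lam).
Proof. by rewrite /orderedb; case: excluded_middle_informative => ?; constructor. Qed.

Section DeletedGraph.
Variables (T : finType) (e : rel T).

Lemma del_rel_sym (S : {set T}) : symmetric e -> symmetric (del_rel e S).
Proof. by move=> e_sym x y; rewrite /del_rel /= e_sym; congr (_ && _); apply: andbC. Qed.

Lemma path_del_rel (S : {set T}) x p : x \notin S ->
  path (del_rel e S) x p = path e x p && all (fun v => v \notin S) p.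
Proof.
elim: p x => //= y p IHp x xS.
rewrite /del_rel /= xS; case yS: (y \notin S); last by rewrite !andbF.
by rewrite IHp // !andbT andbA.
Qed.

End DeletedGraph.

Section OrderedColouring.
Variables (T : finType) (e : rel T) (lam : T -> nat).
Hypothesis lam_ordered : ordered_coloring e lam.

Let low m := [set v | m < lam v].

(* [x] is the last vertex of colour [m] met and [s] the stretch, all of colour
   below [m], walked since; orderedness forces the next vertex of colour [m] to
   be [x] again. *)
Lemma ordered_walk_last m p : forall x s,
  lam x = m -> all (fun v => lam v < m) s -> all (fun v => lam v <= m) p ->
  path e x (s ++ p) -> lam (last x (s ++ p)) = m -> last x (s ++ p) = x.
Proof.
elim: p => [|y p IHp] x s lx s_lt; rewrite ?cats0.
  case/lastP: s s_lt => // s z; rewrite all_rcons last_rcons => /andP[lz _] _ _.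
  by move=> lzm; rewrite lzm ltnn in lz.
rewrite /= => /andP[ly p_le] xp.
case: (ltngtP (lam y) m) ly => // [ly | ly] _.
  by rewrite -cat_rcons in xp *; apply: IHp; rewrite ?all_rcons ?ly.
have xy : x = y.
  apply/eqP/negPn/negP => /(lam_ordered) /(_ (etrans lx (esym ly))); apply.
  exists s; rewrite /path_via lx s_lt andbT.
  by move: xp; rewrite cat_path rcons_path => /andP[-> /andP[]].
subst y; move: xp; rewrite cat_path => /andP[_ /= /andP[_ xp]] lp.
rewrite last_cat /=; apply: (IHp x [::]) => //.
by move: lp; rewrite last_cat.
Qed.

Lemma ordered_connect_low m x y :
  connect (del_rel e (low m)) x y -> lam x = m -> lam y = m -> x = y.
Proof.
move=> /connectP[p xp ->] lx lp; subst m.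
have xm : x \notin low (lam x) by rewrite inE ltnn.
move: xp; rewrite path_del_rel // => /andP[xp p_le].
apply/esym/(ordered_walk_last (s := [::])) => //=.
by apply: sub_all p_le => v; rewrite inE -leqNgt.
Qed.

Lemma ordered_separator u w : symmetric e -> u != w -> lam u = lam w ->
  exists S : {set T}, [/\ {in S &, injective lam}, {in S, forall z, lam u < lam z}
                        & ~~ connect (del_rel e S) u w].
Proof.
move=> e_sym uw luw.
pose S := [set z | lam u < lam z & connect (del_rel e (low (lam z))) u z].
exists S; split.
- move=> z1 z2 /[!inE] /andP[_ uz1] /andP[_ uz2] lz.
  apply: (ordered_connect_low (m := lam z1)) => //.
  rewrite lz in uz1 *; apply: connect_trans uz2.
  by rewrite (sym_connect_sym (del_rel_sym _ e_sym)).
- by move=> z /[!inE] /andP[].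
apply/negP => /connectP[p up wp].
have uS : u \notin S by rewrite inE ltnn.
move: up; rewrite path_del_rel // => /andP[up p_notS].
case: (@arg_maxnP _ u [in u :: p] lam (mem_head u p)) => z zp z_max.
have low_p : path (del_rel e (low (lam z))) u p.
  have below_z v : v \in u :: p -> v \notin low (lam z) by move=> /z_max; rewrite inE -leqNgt.
  rewrite path_del_rel ?below_z ?mem_head // up /=.
  by apply/allP => v vp; rewrite below_z // inE vp orbT.
have uz := path_connect low_p zp.
case: (ltnP (lam u) (lam z)) => [lt_uz | le_zu].
  have : z \in S by rewrite inE lt_uz uz.
  by move: zp; rewrite inE => /predU1P[-> | /(allP p_notS) /negPf ->]; rewrite ?(negPf uS).
have lz : lam z = lam u by apply/eqP; rewrite eqn_leq le_zu; exact: z_max (mem_head u p).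
have := path_connect low_p (mem_last u p); rewrite -wp lz => /ordered_connect_low.
by move=> /(_ erefl (esym luw)) /eqP; rewrite (negPf uw).
Qed.

End OrderedColouring.

Lemma ordered_colour_class_le1 (T : finType) (e : rel T) q k
    (l : {ffun T -> 'I_k}) (J : 'I_k) :
  symmetric e -> ordered_coloring e (colour l) ->
  (forall S : {set T}, #|S| < q ->
    forall u w, u \notin S -> w \notin S -> connect (del_rel e S) u w) ->
  k - q < J.+1 -> #|[set x | l x == J]| <= 1.
Proof.
move=> e_sym l_ordered q_conn Jq; apply/card_le1P => u uJ w.
apply/idP/idP => [wJ | /eqP -> //]; apply/eqP/esym/eqP/negP => /negP uw.
move: uJ wJ; rewrite !inE => /eqP uJ /eqP wJ.
have [|S [injS S_gt /negP]] := ordered_separator l_ordered e_sym uw.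
  by rewrite /colour uJ wJ.
have notS v : colour l v = J.+1 -> v \notin S.
  by move=> lv; apply/negP => /S_gt; rewrite lv /colour uJ ltnn.
apply; apply: q_conn; rewrite ?notS /colour ?uJ ?wJ //.
have injlS : {in S &, injective l}.
  by move=> z1 z2 z1S z2S lz; apply: injS; rewrite // /colour lz.
have : #|l @: S| <= #|[set i : 'I_k | J < i]|.
  apply/subset_leq_card/subsetP => _ /imsetP[z zS ->].
  by rewrite inE -ltnS; have := S_gt z zS; rewrite /colour uJ.
rewrite card_in_imset // card_ord_gt; have := ltn_ord J; lia.
Qed.

Theorem mainTheorem11 (T : finType) (e : rel T) (q : nat) :
  simple_graph e -> 1 <= q -> q_connected e q ->
  (forall alpha : seq nat, composition #|T| alpha ->
     (exists j : nat, [/\ j < size alpha, size alpha - q < j.+1 & 1 < nth 0 alpha j]) ->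
     zeta e alpha = 0)
  /\
  (connected_graph e ->
   forall alpha : seq nat, composition #|T| alpha ->
     1 < last 0 alpha -> zeta e alpha = 0).
Proof.
move=> [e_sym _] q_gt0 [_ q_conn].
have large_class_zeta0 alpha j : j < size alpha -> size alpha - q < j.+1 ->
    1 < nth 0 alpha j -> zeta e alpha = 0.
  move=> j_lt jq aj; apply/eqP; rewrite cards_eq0; apply/eqP/setP => l; rewrite !inE.
  apply/negbTE/and3P => -[_ /orderedbP l_ordered /forallP /(_ (Ordinal j_lt)) /eqP classJ].
  have := ordered_colour_class_le1 (J := Ordinal j_lt) e_sym l_ordered q_conn jq.
  by rewrite classJ leqNgt aj.
split=> [alpha _ [j [j_lt jq aj]] | _ alpha _ a_last]; first exact: large_class_zeta0 jq aj.
have size_gt0 : 0 < size alpha by move: a_last; case: (alpha).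
by apply: (large_class_zeta0 _ (size alpha).-1); rewrite ?prednK ?nth_last //; lia.
Qed.
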